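(* Let $W(y|x_1,x_2)$ be a discrete memoryless multiple access channel with finite input alphabets $\mathcal{X}_1,\mathcal{X}_2$ and finite output alphabet $\mathcal{Y}$, and let $\delta,\eta>0$. Let $(x_1^n,x_2^n)$ and $(\tilde{x}_1^n,\tilde{x}_2^n)$ be pairs of words with Hamming distances $d_H(x_1^n,\tilde{x}_1^n)\ge\delta n$ and $d_H(x_2^n,\tilde{x}_2^n)\ge\delta n$, and suppose that for all $x_1\in\mathcal{X}_1,x_2\in\mathcal{X}_2$ and every probability distribution $\mathcal{P}$ on $\mathcal{X}_1\times\mathcal{X}_2$ with $\mathcal{P}(x_1,x_2)=0$, \[ \Big\|W_{x_1,x_2}-\sum_{\tilde{x}_1,\tilde{x}_2}\mathcal{P}(\tilde{x}_1,\tilde{x}_2)W_{\tilde{x}_1,\tilde{x}_2}\Big\|\ge\eta . \] Then, with $\epsilon=\frac{\delta^4\eta^2}{2|\mathcal{X}_1|^2|\mathcal{X}_2|^2|\mathcal{Y}|}$, \[ W^n_{\tilde{x}_1^n,\tilde{x}_2^n}\big(\mathcal{T}^n_{W,\epsilon}(x_1^n,x_2^n)\big)\le 2\exp\Big(-\frac{n\epsilon^4}{2}\Big). \]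
   Context: $W_{x_1,x_2}$ denotes the output distribution $W(\cdot|x_1,x_2)$ on $\mathcal{Y}$; $\|\cdot\|$ is the statistical distance $\|P-Q\|=\frac12\sum_y|P(y)-Q(y)|$. For words $x_1^n,x_2^n$, $W^n_{x_1^n,x_2^n}=W_{x_{1,1}x_{2,1}}\otimes\cdots\otimes W_{x_{1,n}x_{2,n}}$ is the product output distribution on $\mathcal{Y}^n$. $\mathcal{T}^n_{W,\epsilon}(x_1^n,x_2^n)\subseteq\mathcal{Y}^n$ is the set of output sequences that are conditionally $\epsilon$-typical given $(x_1^n,x_2^n)$ with respect to $W$ (jointly typical with $(x_1^n,x_2^n)$), i.e. the sequences $y^n$ whose joint empirical counts with $(x_1^n,x_2^n)$ deviate from those expected under $W$ by at most $\epsilon n$. *)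

From mathcomp Require Import all_boot all_order all_algebra.
From mathcomp Require Import reals.
From mathcomp Require Import sequences exp.
Set Implicit Arguments. Unset Strict Implicit. Unset Printing Implicit Defensive.
Import Order.TTheory GRing.Theory Num.Theory.
Local Open Scope ring_scope.

Section Defs.
Variables (R : realType) (X1 X2 Y : finType).

Definition is_channel (W : X1 -> X2 -> Y -> R) : Prop :=
  forall a b, (forall y, 0 <= W a b y) /\ \sum_(y : Y) W a b y = 1.

Definition is_distr2 (P : X1 * X2 -> R) : Prop :=
  (forall u, 0 <= P u) /\ \sum_(u : X1 * X2) P u = 1.

Definition stat_dist (P Q : Y -> R) : R :=
  2^-1 * \sum_(y : Y) `|P y - Q y|.

Definition mixture (W : X1 -> X2 -> Y -> R) (P : X1 * X2 -> R) : Y -> R :=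
  fun y => \sum_(u : X1 * X2) P u * W u.1 u.2 y.

Variable n : nat.

Definition hamming (T : finType) (x x' : {ffun 'I_n -> T}) : nat :=
  #|[set i : 'I_n | x i != x' i]|.

Definition count2 (x1 : {ffun 'I_n -> X1}) (x2 : {ffun 'I_n -> X2}) a b : nat :=
  #|[set i : 'I_n | (x1 i == a) && (x2 i == b)]|.

Definition count3 (x1 : {ffun 'I_n -> X1}) (x2 : {ffun 'I_n -> X2})
  (y : {ffun 'I_n -> Y}) a b c : nat :=
  #|[set i : 'I_n | [&& x1 i == a, x2 i == b & y i == c]]|.

Definition typical_set (W : X1 -> X2 -> Y -> R) (eps : R)
  (x1 : {ffun 'I_n -> X1}) (x2 : {ffun 'I_n -> X2}) : {set {ffun 'I_n -> Y}} :=
  [set y | [forall a, forall b, forall c,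
     `|(count3 x1 x2 y a b c)%:R - (count2 x1 x2 a b)%:R * W a b c| <= eps * n%:R]].

Definition prod_prob (W : X1 -> X2 -> Y -> R)
  (x1 : {ffun 'I_n -> X1}) (x2 : {ffun 'I_n -> X2}) (A : {set {ffun 'I_n -> Y}}) : R :=
  \sum_(y in A) \prod_(i < n) W (x1 i) (x2 i) (y i).

End Defs.

(* Let u = (a, b) be the input pair that is most often overwritten by a different
   pair when x^n is replaced by xt^n; it is overwritten at no fewer than
   delta n / (|X1| |X2|) positions, and the empirical distribution P of the pairs
   that overwrite it vanishes at u.  Separation gives || W_u - sum P W || >= eta,
   hence an output c at which the count N(a,b,c) expected under W^n_xt differs
   from its typical value N(a,b) W_u(c) by at least
   2 eta delta n / (|X1| |X2| |Y|) >= 4 eps n.  An output typical for x^n must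
   therefore deviate by at least 3 eps n from its mean in a sum of n independent
   centred terms bounded by 1, which a Hoeffding bound makes exponentially
   unlikely. *)

From mathcomp Require Import all_boot all_order all_algebra.
From mathcomp Require Import reals sequences exp.
From mathcomp Require Import ring lra.
Set Implicit Arguments. Unset Strict Implicit. Unset Printing Implicit Defensive.
Import Order.TTheory GRing.Theory Num.Theory.
Local Open Scope ring_scope.

Lemma expR_le_quadratic (R : realType) (u : R) :
  u <= 2^-1 -> expR u <= 1 + u + 2 * u ^+ 2.
Proof.
move=> u_le.
have expRN_ge : 1 - u <= expR (- u) by have := expR_ge1Dx (- u).
have expR_mul_le1 : expR u * (1 - u) <= 1.
  apply: (@le_trans _ _ (expR u * expR (- u))); last by rewrite -expRD subrr expR0.
  by rewrite ler_wpM2l ?expR_ge0.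
rewrite -(ler_pM2r (_ : 0 < 1 - u)); last by lra.
apply: le_trans expR_mul_le1 _.
have : 0 <= u ^+ 2 * (1 - 2 * u) by rewrite mulr_ge0 ?sqr_ge0 //; lra.
rewrite expr2; nra.
Qed.

Lemma exists_sum_le_card_mul (R : realDomainType) (T : finType) (F : T -> R) :
  0 < \sum_t F t -> exists t, \sum_s F s <= #|T|%:R * F t.
Proof.
case: (pickP T) => [t0 _ _|T0]; last by rewrite big_pred0 // ltxx.
exists [arg max_(t > t0) F t]%O; case: arg_maxP => // t _ F_le.
rewrite -sum1_card natr_sum mulr_suml.
by apply: ler_sum => s _; rewrite mul1r; exact: F_le.
Qed.

Section Hoeffding.
Variables (R : realType) (Y : finType) (n : nat) (p : 'I_n -> Y -> R).
Hypotheses (p_ge0 : forall i y, 0 <= p i y) (p_sum1 : forall i, \sum_y p i y = 1).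

Lemma sum_prod_expR_sum (h : 'I_n -> Y -> R) :
  \sum_(y : {ffun 'I_n -> Y}) (\prod_i p i (y i)) * expR (\sum_i h i (y i)) =
  \prod_i \sum_z p i z * expR (h i z).
Proof.
rewrite (bigA_distr_bigA (fun i z => p i z * expR (h i z))) /=.
by apply: eq_bigr => y _; rewrite expR_sum -big_split.
Qed.

Lemma sum_prod_le1 (T : {set {ffun 'I_n -> Y}}) : \sum_(y in T) \prod_i p i (y i) <= 1.
Proof.
apply: (@le_trans _ _ (\sum_(y : {ffun 'I_n -> Y}) \prod_i p i (y i))).
  rewrite [leRHS](bigID (mem T)) /= lerDl.
  by apply: sumr_ge0 => y _; exact: prodr_ge0.
by rewrite -(bigA_distr_bigA p) /= big1.
Qed.

Lemma mgf_le (g : Y -> R) (i : 'I_n) (lam : R) :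
  \sum_y p i y * g y = 0 -> (forall y, `|g y| <= 1) -> `|lam| <= 2^-1 ->
  \sum_y p i y * expR (lam * g y) <= expR (2 * lam ^+ 2).
Proof.
move=> g_mean0 g_le1 lam_le.
apply: le_trans _ (expR_ge1Dx _).
apply: (@le_trans _ _ (\sum_y p i y * (1 + lam * g y + 2 * lam ^+ 2))).
  apply: ler_sum => y _; rewrite ler_wpM2l //.
  have lamg_le : lam * g y <= 2^-1.
    apply: le_trans (ler_norm _) _.
    by rewrite normrM -[2^-1]mulr1 ler_pM ?normr_ge0.
  apply: le_trans (expR_le_quadratic lamg_le) _.
  rewrite lerD2l ler_pM2l // exprMn ler_piMr ?sqr_ge0 //.
  by move: (g_le1 y); rewrite ler_norml expr2 => /andP[? ?]; nra.
rewrite (eq_bigr (fun y => p i y * (1 + 2 * lam ^+ 2) + lam * (p i y * g y))).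
  by rewrite big_split /= -mulr_suml -mulr_sumr p_sum1 g_mean0 mulr0 addr0 mul1r.
by move=> y _; ring.
Qed.

Lemma chernoff_bound (g : 'I_n -> Y -> R) (lam s : R) (T : pred {ffun 'I_n -> Y}) :
  (forall i, \sum_y p i y * g i y = 0) -> (forall i y, `|g i y| <= 1) ->
  `|lam| <= 2^-1 -> (forall y, T y -> s <= lam * \sum_i g i (y i)) ->
  \sum_(y | T y) \prod_i p i (y i) <= expR (n%:R * (2 * lam ^+ 2) - s).
Proof.
move=> g_mean0 g_le1 lam_le s_le.
have prod_ge0 y : 0 <= \prod_i p i (y i) by apply: prodr_ge0.
apply: (@le_trans _ _ (\sum_(y : {ffun 'I_n -> Y}) (\prod_i p i (y i)) *
                          expR (\sum_i lam * g i (y i) - s))).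
  rewrite [leRHS](bigID T) /= -[leLHS]addr0 lerD //; last first.
    by apply: sumr_ge0 => y _; rewrite mulr_ge0 ?expR_ge0.
  apply: ler_sum => y yT; rewrite -[leLHS]mulr1 ler_wpM2l //.
  by rewrite -expR0 ler_expR subr_ge0 -mulr_sumr s_le.
under eq_bigr do rewrite expRD mulrA.
rewrite -mulr_suml (sum_prod_expR_sum (fun i z => lam * g i z)).
rewrite expRD ler_wpM2r ?expR_ge0 // expRM_natl -[in leRHS](card_ord n) -prodr_const.
apply: ler_prod => i _; apply/andP; split; last exact: mgf_le.
by apply: sumr_ge0 => z _; rewrite mulr_ge0 ?expR_ge0.
Qed.

Lemma hoeffding_abs (g : 'I_n -> Y -> R) (eps t : R) (T : {set {ffun 'I_n -> Y}}) :
  (forall i, \sum_y p i y * g i y = 0) -> (forall i y, `|g i y| <= 1) ->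
  0 <= eps <= 2^-1 -> (forall y, y \in T -> t <= `|\sum_i g i (y i)|) ->
  \sum_(y in T) \prod_i p i (y i) <= 2 * expR (n%:R * (2 * eps ^+ 2) - eps * t).
Proof.
move=> g_mean0 g_le1 /andP[eps_ge0 eps_le] t_le.
have eps_norm : `|eps| <= 2^-1 by rewrite ger0_norm.
rewrite (bigID (fun y : {ffun 'I_n -> Y} => t <= \sum_i g i (y i))) /=.
rewrite -[2]/(1 + 1) mulrDl mul1r; apply: lerD.
  apply: chernoff_bound => // y /andP[_ t_le_sum]; exact: ler_wpM2l.
rewrite -sqrrN; apply: chernoff_bound => //; first by rewrite normrN.
move=> y /andP[yT]; rewrite -ltNge mulNr -mulrN => sum_lt_t.
by rewrite ler_wpM2l //; move: (t_le y yT); rewrite ler_normr leNgt sum_lt_t.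
Qed.

End Hoeffding.

Lemma natr_card_set (R : numDomainType) (I : finType) (P : pred I) :
  #|[set i | P i]|%:R = \sum_i (P i)%:R :> R.
Proof.
rewrite -sum1_card natr_sum big_mkcond /=; apply: eq_bigr => i _.
by rewrite inE; case: (P i).
Qed.

Section Empirical.
Variables (R : realType) (I T : finType) (A : {set I}) (f : I -> T).

Definition empirical (v : T) : R := #|[set i in A | f i == v]|%:R / #|A|%:R.

Lemma empirical_ge0 v : 0 <= empirical v.
Proof. by rewrite divr_ge0 ?ler0n. Qed.

Lemma empirical_eq0 v : (forall i, i \in A -> f i != v) -> empirical v = 0.
Proof.
move=> f_neq; rewrite /empirical (_ : [set i in A | f i == v] = set0) ?cards0 ?mul0r //.
by apply/setP => i; rewrite !inE; case: (boolP (i \in A)) => // /f_neq /negbTE.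
Qed.

Lemma sum_empirical_mul (F : T -> R) :
  \sum_v empirical v * F v = (\sum_(i in A) F (f i)) / #|A|%:R.
Proof.
rewrite (partition_big f predT) //= mulr_suml; apply: eq_bigr => v _.
rewrite mulrAC; congr (_ / _).
rewrite (eq_bigr (fun _ => F v)) => [|i /andP[_ /eqP ->] //].
by rewrite -big_set sumr_const mulr_natl.
Qed.

Lemma sum_empirical : A != set0 -> \sum_v empirical v = 1.
Proof.
move=> A_neq0; have := sum_empirical_mul (fun _ => 1).
under eq_bigr do rewrite mulr1; move=> ->.
have -> : \sum_(i in A) (1 : R) = #|A|%:R by rewrite -sum1_card natr_sum.
by rewrite divff // pnatr_eq0 cards_eq0.
Qed.

End Empirical.

Lemma stat_dist_le1 (R : realType) (Y : finType) (P Q : Y -> R) :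
  (forall y, 0 <= P y) -> \sum_y P y = 1 ->
  (forall y, 0 <= Q y) -> \sum_y Q y = 1 -> stat_dist P Q <= 1.
Proof.
move=> P_ge0 P_sum1 Q_ge0 Q_sum1; rewrite /stat_dist.
have : \sum_y `|P y - Q y| <= 2.
  rewrite -[2]/(1 + 1) -{1}P_sum1 -Q_sum1 -big_split /=.
  apply: ler_sum => y _; apply: le_trans (ler_normB _ _) _.
  by rewrite !ger0_norm.
lra.
Qed.

Lemma hamming_le (n : nat) (T : finType) (x y : {ffun 'I_n -> T}) : (hamming x y <= n)%N.
Proof. by rewrite /hamming (leq_trans (max_card _)) ?card_ord. Qed.

Section Drift.
Variables (R : realType) (X1 X2 Y : finType) (W : X1 -> X2 -> Y -> R).
Hypothesis W_channel : is_channel W.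

Let W_ge0 a b y : 0 <= W a b y. Proof. by case: (W_channel a b). Qed.
Let W_sum1 a b : \sum_y W a b y = 1. Proof. by case: (W_channel a b). Qed.
Let W_le1 a b y : W a b y <= 1.
Proof. by rewrite -(W_sum1 a b) (bigD1 y) //= lerDl sumr_ge0. Qed.

Lemma stat_dist_mixture_le1 a b (P : X1 * X2 -> R) :
  is_distr2 P -> stat_dist (W a b) (mixture W P) <= 1.
Proof.
case=> P_ge0 P_sum1; apply: stat_dist_le1 => // [y|].
  by apply: sumr_ge0 => u _; rewrite mulr_ge0.
rewrite /mixture exchange_big /=.
by under eq_bigr do rewrite -mulr_sumr W_sum1 mulr1.
Qed.

Variables (n : nat) (x1 xt1 : {ffun 'I_n -> X1}) (x2 xt2 : {ffun 'I_n -> X2}).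
Let x i := (x1 i, x2 i).
Let xt i := (xt1 i, xt2 i).

Lemma prod_prob_le1 (A : {set {ffun 'I_n -> Y}}) : prod_prob W xt1 xt2 A <= 1.
Proof.
exact: (@sum_prod_le1 _ _ _ (fun i => W (xt1 i) (xt2 i)) (fun i => W_ge0 _ _)
  (fun i => W_sum1 _ _)).
Qed.

Definition mismatch (u : X1 * X2) : {set 'I_n} := [set i | (x i == u) && (xt i != u)].

Definition confusion_distr (u : X1 * X2) : X1 * X2 -> R := empirical R (mismatch u) xt.

Lemma confusion_distr_is_distr u : mismatch u != set0 -> is_distr2 (confusion_distr u).
Proof. by move=> S_neq0; split; [exact: empirical_ge0 | exact: sum_empirical]. Qed.

Lemma confusion_distr_eq0 u : confusion_distr u u = 0.
Proof. by apply: empirical_eq0 => i; rewrite inE => /andP[]. Qed.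

Lemma hamming_le_sum_mismatch : (hamming x1 xt1 <= \sum_u #|mismatch u|)%N.
Proof.
apply: (@leq_trans #|[set i | x i != xt i]|).
  by apply/subset_leq_card/subsetP => i; rewrite !inE xpair_eqE negb_and => ->.
rewrite -sum1_card (partition_big x predT) //=; apply: leq_sum => u _.
rewrite -big_set sum1_card; apply/subset_leq_card/subsetP => i.
by rewrite /mismatch !inE andbC; case: eqP => //= <-; rewrite eq_sym.
Qed.

Lemma exists_large_mismatch (delta : R) :
  0 < delta * n%:R -> delta * n%:R <= (hamming x1 xt1)%:R ->
  exists2 u, mismatch u != set0 & delta * n%:R <= #|X1|%:R * #|X2|%:R * #|mismatch u|%:R.
Proof.
move=> dn_gt0 dn_le.
have sum_ge : delta * n%:R <= \sum_u #|mismatch u|%:R.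
  by rewrite -natr_sum; apply: le_trans dn_le _; rewrite ler_nat hamming_le_sum_mismatch.
have [u u_max] := exists_sum_le_card_mul (lt_le_trans dn_gt0 sum_ge).
exists u; last by rewrite -natrM -card_prod; apply: le_trans sum_ge u_max.
apply: contraTneq u_max => ->; rewrite cards0 mulr0 -ltNge.
exact: lt_le_trans dn_gt0 sum_ge.
Qed.

(* N(a,b|x) W(c|a,b) minus the mean of N(a,b,c|x,y) for y drawn from W^n_xt. *)
Definition drift a b c : R := \sum_(i | x i == (a, b)) (W a b c - W (xt1 i) (xt2 i) c).

Lemma drift_mixture a b c :
  drift a b c = #|mismatch (a, b)|%:R * (W a b c - mixture W (confusion_distr (a, b)) c).
Proof.
set S := mismatch (a, b).
have -> : drift a b c = \sum_(i in S) (W a b c - W (xt1 i) (xt2 i) c).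
  rewrite /drift (bigID (fun i => xt i == (a, b))) /= big1 ?add0r.
    by apply: eq_bigl => i; rewrite inE.
  by move=> i /andP[_ /eqP[-> ->]]; rewrite subrr.
rewrite sumrB sumr_const mulrBr mulr_natl; congr (_ - _).
rewrite /mixture /confusion_distr (sum_empirical_mul _ _ (fun u => W u.1 u.2 c)) /=.
have [->|S_neq0] := eqVneq S set0; first by rewrite big_set0 cards0 mul0r.
by rewrite mulrC divfK // pnatr_eq0 cards_eq0.
Qed.

Lemma sum_abs_drift a b :
  \sum_c `|drift a b c| =
  2 * #|mismatch (a, b)|%:R * stat_dist (W a b) (mixture W (confusion_distr (a, b))).
Proof.
under eq_bigr do rewrite drift_mixture normrM ger0_norm ?ler0n //.
by rewrite -mulr_sumr /stat_dist mulrAC -!mulrA mulVKf ?pnatr_eq0 // mulrC.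
Qed.

Lemma exists_large_drift a b (eta : R) :
  0 < eta -> mismatch (a, b) != set0 ->
  eta <= stat_dist (W a b) (mixture W (confusion_distr (a, b))) ->
  exists c, 2 * #|mismatch (a, b)|%:R * eta <= #|Y|%:R * `|drift a b c|.
Proof.
move=> eta_gt0 S_neq0 eta_le.
have sum_ge : 2 * #|mismatch (a, b)|%:R * eta <= \sum_c `|drift a b c|.
  by rewrite sum_abs_drift ler_wpM2l // mulr_ge0.
have [|c c_max] := exists_sum_le_card_mul (lt_le_trans _ sum_ge).
  by rewrite !mulr_gt0 // ltr0n lt0n cards_eq0.
by exists c; apply: le_trans sum_ge c_max.
Qed.

Definition centered_hit a b c i (z : Y) : R :=
  (x i == (a, b))%:R * ((z == c)%:R - W (xt1 i) (xt2 i) c).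

Lemma centered_hit_mean0 a b c i : \sum_z W (xt1 i) (xt2 i) z * centered_hit a b c i z = 0.
Proof.
under eq_bigr do rewrite mulrCA mulrBr.
rewrite -mulr_sumr sumrB -mulr_suml W_sum1 mul1r (bigD1 c) //= eqxx mulr1.
by rewrite big1 ?addr0 ?subrr ?mulr0 // => z /negbTE ->; rewrite mulr0.
Qed.

Lemma centered_hit_le1 a b c i z : `|centered_hit a b c i z| <= 1.
Proof.
rewrite normrM; case: (x i == _); last by rewrite normr0 mul0r ler01.
have := W_ge0 (xt1 i) (xt2 i) c; have := W_le1 (xt1 i) (xt2 i) c.
by rewrite normr1 mul1r ler_norml; case: (z == c) => /=; lra.
Qed.

Lemma sum_centered_hit a b c (y : {ffun 'I_n -> Y}) :
  \sum_i centered_hit a b c i (y i) =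
  (count3 x1 x2 y a b c)%:R - (count2 x1 x2 a b)%:R * W a b c + drift a b c.
Proof.
rewrite /count3 /count2 !natr_card_set /drift mulr_suml -sumrB.
rewrite [X in _ = _ + X]big_mkcond -big_split /=.
apply: eq_bigr => i _; rewrite /centered_hit /x xpair_eqE.
by case: (x1 i == a); case: (x2 i == b); case: (y i == c) => /=; ring.
Qed.

Lemma typical_sum_centered_hit_ge (eps : R) a b c y :
  y \in typical_set W eps x1 x2 ->
  `|drift a b c| - eps * n%:R <= `|\sum_i centered_hit a b c i (y i)|.
Proof.
rewrite inE => /forallP/(_ a)/forallP/(_ b)/forallP/(_ c) dev_le.
rewrite sum_centered_hit [_ + drift _ _ _]addrC; apply: le_trans (lerB_normD _ _).
by rewrite lerD2l lerN2.
Qed.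

Lemma prod_prob_typical_le (eps : R) a b c :
  0 <= eps <= 2^-1 -> 4 * eps * n%:R <= `|drift a b c| ->
  prod_prob W xt1 xt2 (typical_set W eps x1 x2) <= 2 * expR (- (eps ^+ 2 * n%:R)).
Proof.
move=> /[dup] eps_bd /andP[eps_ge0 _] drift_ge.
have := @hoeffding_abs _ _ _ (fun i => W (xt1 i) (xt2 i)) (fun i => W_ge0 _ _)
  (fun i => W_sum1 _ _) _ _ _ _ (@centered_hit_mean0 a b c) (@centered_hit_le1 a b c)
  eps_bd (@typical_sum_centered_hit_ge eps a b c).
move/le_trans; apply.
rewrite ler_pM2l // ler_expR; nra.
Qed.

End Drift.

Lemma eps_ge0_le_half (R : realFieldType) (d e k1 k2 ky : R) :
  0 <= d -> d <= 1 -> 0 <= e -> e <= 1 -> 1 <= k1 -> 1 <= k2 -> 1 <= ky ->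
  0 <= d ^+ 4 * e ^+ 2 / (2 * k1 ^+ 2 * k2 ^+ 2 * ky) <= 2^-1.
Proof.
move=> d_ge0 d_le1 e_ge0 e_le1 k1_ge1 k2_ge1 ky_ge1.
have num_ge0 : 0 <= d ^+ 4 * e ^+ 2 by rewrite mulr_ge0 ?exprn_ge0.
have num_le1 : d ^+ 4 * e ^+ 2 <= 1 by rewrite mulr_ile1 ?exprn_ge0 ?exprn_ile1.
have den_ge2 : 2 <= 2 * k1 ^+ 2 * k2 ^+ 2 * ky.
  have : 1 <= k1 ^+ 2 * k2 ^+ 2 * ky by rewrite !mulr_ege1 ?exprn_ege1.
  lra.
by rewrite divr_ge0 ?ler_pdivrMr /=; lra.
Qed.

Lemma four_eps_mul_le (R : realFieldType) (d e k1 k2 ky m N t : R) :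
  0 <= d -> d <= 1 -> 0 <= e -> e <= 1 -> 1 <= k1 -> 1 <= k2 -> 1 <= ky -> 0 <= m ->
  d * N <= k1 * k2 * m -> 2 * m * e <= ky * t ->
  4 * (d ^+ 4 * e ^+ 2 / (2 * k1 ^+ 2 * k2 ^+ 2 * ky)) * N <= t.
Proof.
move=> d_ge0 d_le1 e_ge0 e_le1 k1_ge1 k2_ge1 ky_ge1 m_ge0 dN_le t_ge.
set K := k1 * k2 in dN_le *.
have K_ge1 : 1 <= K by rewrite mulr_ege1.
have den_gt0 : 0 < K ^+ 2 * ky by rewrite mulr_gt0 ?exprn_gt0; lra.
have -> : 4 * (d ^+ 4 * e ^+ 2 / (2 * k1 ^+ 2 * k2 ^+ 2 * ky)) * N =
          2 * d ^+ 3 * e ^+ 2 * (d * N) / (K ^+ 2 * ky).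
  by rewrite /K; field; rewrite ?mulf_neq0 ?expf_neq0 //; lra.
rewrite ler_pdivrMr //.
have c_ge0 : 0 <= 2 * d ^+ 3 * e ^+ 2 by rewrite !mulr_ge0 ?exprn_ge0.
apply: le_trans (ler_wpM2l c_ge0 dN_le) _.
have d3e_le1 : d ^+ 3 * e <= 1 by rewrite mulr_ile1 ?exprn_ge0 ?exprn_ile1.
have me_ge0 : 0 <= 2 * m * e by rewrite !mulr_ge0.
have -> : 2 * d ^+ 3 * e ^+ 2 * (K * m) = (d ^+ 3 * e) * (2 * m * e) * K by ring.
have -> : t * (K ^+ 2 * ky) = (ky * t) * K * K by ring.
apply: ler_wpM2r; first lra.
apply: le_trans (_ : _ <= 2 * m * e) _; first by rewrite ler_piMl.
by apply: (le_trans t_ge); rewrite ler_peMr //; lra.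
Qed.

Lemma half_mul_expr4_le (R : realFieldType) (eps N : R) :
  0 <= eps -> eps <= 1 -> 0 <= N -> N * eps ^+ 4 / 2 <= eps ^+ 2 * N.
Proof.
move=> eps_ge0 eps_le1 N_ge0.
have eps4_le : eps ^+ 4 <= eps ^+ 2.
  by rewrite -[4%N]/(2 + 2)%N exprD ler_piMr ?exprn_ge0 ?exprn_ile1.
have : 0 <= N * eps ^+ 4 by rewrite mulr_ge0 ?exprn_ge0.
have := ler_wpM2l N_ge0 eps4_le; lra.
Qed.

Theorem lemma6 (R : realType) (X1 X2 Y : finType) (W : X1 -> X2 -> Y -> R)
  (delta eta : R) (n : nat)
  (x1 xt1 : {ffun 'I_n -> X1}) (x2 xt2 : {ffun 'I_n -> X2}) :
  is_channel W ->
  0 < delta -> 0 < eta ->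
  delta * n%:R <= (hamming x1 xt1)%:R ->
  delta * n%:R <= (hamming x2 xt2)%:R ->
  (forall (a : X1) (b : X2) (P : X1 * X2 -> R),
      is_distr2 P -> P (a, b) = 0 -> eta <= stat_dist (W a b) (mixture W P)) ->
  let eps := delta ^+ 4 * eta ^+ 2 /
             (2 * (#|X1|%:R) ^+ 2 * (#|X2|%:R) ^+ 2 * #|Y|%:R) in
  prod_prob W xt1 xt2 (typical_set W eps x1 x2) <=
    2 * expR (- (n%:R * eps ^+ 4 / 2)).
Proof.
move=> W_channel delta_gt0 eta_gt0 hamming1_ge _ separated.
cbv zeta; set eps := (X in typical_set W X).
have [n0|n_gt0] := posnP n.
  have -> : (n%:R : R) = 0 by rewrite n0.
  rewrite mul0r mul0r oppr0 expR0 mulr1; apply: le_trans (prod_prob_le1 W_channel _ _ _) _.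
  lra.
have dn_gt0 : 0 < delta * n%:R by rewrite mulr_gt0 // ltr0n.
have [[a b] S_neq0 S_large] := exists_large_mismatch x2 xt2 dn_gt0 hamming1_ge.
have P_distr := confusion_distr_is_distr R S_neq0.
have eta_le := separated a b _ P_distr (confusion_distr_eq0 R x1 xt1 x2 xt2 (a, b)).
have [c drift_large] := exists_large_drift eta_gt0 S_neq0 eta_le.
have delta_le1 : delta <= 1.
  have : delta * n%:R <= 1 * n%:R.
    by apply: le_trans hamming1_ge _; rewrite mul1r ler_nat hamming_le.
  by rewrite ler_pM2r // ltr0n.
have eta_le1 : eta <= 1 := le_trans eta_le (stat_dist_mixture_le1 W_channel _ _ P_distr).
have card_ge1 (T : finType) (t : T) : 1 <= #|T|%:R :> R.
  by rewrite ler1n; apply/card_gt0P; exists t.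
move: (card_ge1 _ a) (card_ge1 _ b) (card_ge1 _ c) (ltW delta_gt0) (ltW eta_gt0).
move=> k1_ge1 k2_ge1 ky_ge1 delta_ge0 eta_ge0.
have eps_bd : 0 <= eps <= 2^-1 by apply: eps_ge0_le_half.
apply: le_trans (prod_prob_typical_le W_channel eps_bd _) _.
  exact: four_eps_mul_le S_large drift_large.
rewrite -/eps ler_pM2l // ler_expR lerN2.
by case/andP: eps_bd => eps_ge0 eps_le; rewrite half_mul_expr4_le ?ler0n //; lra.
Qed.
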